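(* If a natural number $m$ occurs twice in $(a(n))_{n\ge0}$, say $a(x)=a(y)=m$ with $x<y$, then $y=x+1$.
   Context: $\mathbb{N}=\{0,1,2,\ldots\}$. Let $(F_n)_{n\ge 0}$ be the Fibonacci numbers: $F_0=0$, $F_1=1$, $F_n=F_{n-1}+F_{n-2}$ for $n\ge 2$. Define $(a(n))_{n\ge 0}$ (OEIS A105774) by $a(0)=0$, $a(1)=1$, and for $n\ge 2$, $a(n)=F_{j+1}-a(n-F_j)$, where $j\ge 2$ is the unique index with $F_j<n\le F_{j+1}$. *)

From Stdlib Require Import Arith List.
Import ListNotations.

Fixpoint fib (n : nat) : nat :=
  match n with
  | 0 => 0
  | S m => match m with
           | 0 => 1
           | S k => fib m + fib k
           end
  end.

(* For n >= 2, fidx n is the unique j >= 2 with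
   F j < n <= F (j+1) (F is strictly increasing from index 2 on, F 2 = 1 < n). *)
Fixpoint fidx_from (k j n : nat) : nat :=
  match k with
  | 0 => j
  | S k' => if n <=? fib (S j) then j else fidx_from k' (S j) n
  end.

Definition fidx (n : nat) : nat := fidx_from n 2 n.

(* a with fuel: for n >= 2, a n = F (j+1) - a (n - F j); the argument
   n - F j is strictly smaller than n, so fuel n suffices. *)
Fixpoint a_fuel (fuel n : nat) : nat :=
  match fuel with
  | 0 => 0
  | S f =>
    match n with
    | 0 => 0
    | 1 => 1
    | _ => let j := fidx n in fib (S j) - a_fuel f (n - fib j)
    end
  end.

(* OEIS A105774 *)
Definition a (n : nat) : nat := a_fuel n n.

Example a_values :
  map a (seq 0 16) = [0;1;1;2;4;4;7;7;6;12;12;11;9;9;20;20].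
Proof. vm_compute. reflexivity. Qed.

From Stdlib Require Import Arith Lia.

(* For n in the Fibonacci block (F_j, F_{j+1}] (j >= 2), a(n) lies in
   [F_j, F_{j+1}): the reduced argument k = n - F_j is in [1, F_{j-1}], so by
   induction 1 <= a(k) <= F_{j-1}, and a(n) = F_{j+1} - a(k).  The value
   intervals of distinct blocks are disjoint, so a(x) = a(y) with 2 <= x < y
   puts x and y in the same block; the recursion then gives
   a(x - F_j) = a(y - F_j), and induction on y yields y - F_j = x - F_j + 1.
   The arguments 0 and 1 are handled by hand. *)

Lemma fib_SS k : fib (S (S k)) = fib (S k) + fib k.
Proof. reflexivity. Qed.

Lemma fib_le_succ n : fib n <= fib (S n).
Proof. destruct n; [simpl; lia|]. rewrite fib_SS; lia. Qed.

Lemma fib_mono i j : i <= j -> fib i <= fib j.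
Proof.
  induction 1 as [|j _ IH]; [lia|].
  pose proof (fib_le_succ j); lia.
Qed.

Lemma fib_pos i : 0 < i -> 0 < fib i.
Proof. intros Hi. exact (fib_mono 1 i Hi). Qed.

Lemma fib_lt_inv i j : fib i < fib j -> i < j.
Proof.
  intros H. destruct (Nat.lt_ge_cases i j) as [|Hji]; [assumption|].
  apply fib_mono in Hji; lia.
Qed.

Lemma fib_ge_idx n : n <= fib (S n).
Proof.
  induction n as [|n IH]; [simpl; lia|].
  rewrite fib_SS. destruct n; [simpl; lia|].
  pose proof (fib_pos (S n) ltac:(lia)); lia.
Qed.

Lemma fidx_from_spec k j n :
  fib j < n -> n <= fib (S j + k) ->
  j <= fidx_from k j n /\ fib (fidx_from k j n) < n /\
  n <= fib (S (fidx_from k j n)).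
Proof.
  revert j; induction k as [|k IH]; intros j Hj Hn; cbn [fidx_from].
  - rewrite Nat.add_0_r in Hn; lia.
  - destruct (Nat.leb_spec n (fib (S j))) as [Hle|Hgt]; [lia|].
    destruct (IH (S j)) as (A & B & C); [assumption | rewrite <- plus_n_Sm in Hn; exact Hn |].
    lia.
Qed.

Lemma fidx_spec n : 2 <= n ->
  2 <= fidx n /\ fib (fidx n) < n /\ n <= fib (S (fidx n)).
Proof.
  intros Hn. apply fidx_from_spec; [simpl; lia|].
  (* the search from index 2 with fuel n reaches F_{n+3} >= n *)
  pose proof (fib_ge_idx n). pose proof (fib_mono (S n) (S 2 + n)). lia.
Qed.

Lemma a_fuel_stable f g n : n <= f -> n <= g -> a_fuel f n = a_fuel g n.
Proof.
  revert g n; induction f as [|f IH]; intros g n Hf Hg.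
  - replace n with 0 by lia. destruct g; reflexivity.
  - destruct g as [|g]; [replace n with 0 by lia; reflexivity|].
    destruct n as [|[|n]]; try reflexivity.
    cbn [a_fuel].
    destruct (fidx_spec (S (S n))) as (A & _ & _); [lia|].
    pose proof (fib_pos (fidx (S (S n))) ltac:(lia)).
    rewrite (IH g); [reflexivity | lia | lia].
Qed.

Lemma a_rec n : 2 <= n -> a n = fib (S (fidx n)) - a (n - fib (fidx n)).
Proof.
  intros Hn. destruct n as [|[|n]]; try lia.
  destruct (fidx_spec (S (S n))) as (A & _ & _); [lia|].
  pose proof (fib_pos (fidx (S (S n))) ltac:(lia)).
  change (a (S (S n))) with (fib (S (fidx (S (S n)))) - a_fuel (S n) (S (S n) - fib (fidx (S (S n))))).
  rewrite (a_fuel_stable (S n) (S (S n) - fib (fidx (S (S n))))); [reflexivity | lia | lia].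
Qed.

Lemma a_bound_of_range n j :
  1 <= n <= fib (S j) ->
  (2 <= n -> fib (fidx n) <= a n < fib (S (fidx n))) ->
  1 <= a n <= fib (S j).
Proof.
  intros Hn Hrange.
  destruct (Nat.eq_dec n 1) as [->|Hn1].
  { pose proof (fib_pos (S j) ltac:(lia)); change (a 1) with 1; lia. }
  destruct (fidx_spec n) as (A & B & C); [lia|].
  destruct Hrange as [D E]; [lia|].
  assert (Hidx : fidx n < S j) by (apply fib_lt_inv; lia).
  pose proof (fib_pos (fidx n) ltac:(lia)).
  pose proof (fib_mono (S (fidx n)) (S j) Hidx); lia.
Qed.

Lemma a_range n : 2 <= n -> fib (fidx n) <= a n < fib (S (fidx n)).
Proof.
  induction n as [n IH] using (well_founded_induction lt_wf); intros Hn.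
  destruct (fidx_spec n Hn) as (A & B & C).
  rewrite (a_rec n Hn).
  destruct (fidx n) as [|[|j]]; try lia.
  pose proof (fib_SS (S j)). pose proof (fib_SS j). pose proof (fib_pos (S j) ltac:(lia)).
  assert (Hk : 1 <= a (n - fib (S (S j))) <= fib (S j)).
  { apply a_bound_of_range; [lia|]. apply IH; lia. }
  lia.
Qed.

Lemma a_pos n : 1 <= n -> 1 <= a n.
Proof.
  intros Hn.
  assert (H : 1 <= a n <= fib (S n)).
  { apply a_bound_of_range; [pose proof (fib_ge_idx n); lia | apply a_range]. }
  lia.
Qed.

Lemma a_eq_1 y : 2 <= y -> a y = 1 -> y = 2.
Proof.
  intros Hy Ha.
  destruct (fidx_spec y Hy) as (A & _ & C).
  destruct (a_range y Hy) as [D _].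
  destruct (Nat.eq_dec (fidx y) 2) as [E|E].
  - rewrite E in C; change (fib 3) with 2 in C; lia.
  - pose proof (fib_mono 3 (fidx y)); change (fib 3) with 2 in *; lia.
Qed.

Lemma a_eq_same_fidx x y : 2 <= x -> 2 <= y -> a x = a y -> fidx x = fidx y.
Proof.
  intros Hx Hy Ha.
  destruct (a_range x Hx), (a_range y Hy).
  destruct (Nat.lt_trichotomy (fidx x) (fidx y)) as [L|[E|L]]; [|exact E|].
  - pose proof (fib_mono (S (fidx x)) (fidx y) L); lia.
  - pose proof (fib_mono (S (fidx y)) (fidx x) L); lia.
Qed.

Lemma a_eq_reduce x y : 2 <= x -> 2 <= y -> a x = a y ->
  a (x - fib (fidx y)) = a (y - fib (fidx y)).
Proof.
  intros Hx Hy Ha.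
  pose proof (a_rec x Hx) as Rx. pose proof (a_rec y Hy) as Ry.
  rewrite (a_eq_same_fidx x y Hx Hy Ha) in Rx.
  pose proof (a_pos y ltac:(lia)); lia.
Qed.

Theorem proposition2 :
  forall m x y : nat, a x = m -> a y = m -> x < y -> y = x + 1.
Proof.
  intros m x y Hx Hy Hxy. rewrite <- Hy in Hx. clear m Hy. revert x Hx Hxy.
  induction y as [y IH] using (well_founded_induction lt_wf); intros x Ha Hxy.
  destruct x as [|[|x]].
  - change (a 0) with 0 in Ha. pose proof (a_pos y ltac:(lia)); lia.
  - change (a 1) with 1 in Ha. symmetry in Ha.
    destruct (Nat.eq_dec y 1) as [->|Hy]; [lia|].
    apply a_eq_1 in Ha; lia.
  - pose proof (a_eq_reduce (S (S x)) y ltac:(lia) ltac:(lia) Ha) as Hred.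
    destruct (fidx_spec (S (S x))) as (_ & B & _); [lia|].
    destruct (fidx_spec y) as (A & _ & _); [lia|].
    rewrite (a_eq_same_fidx (S (S x)) y ltac:(lia) ltac:(lia) Ha) in B.
    pose proof (fib_pos (fidx y) ltac:(lia)).
    specialize (IH (y - fib (fidx y)) ltac:(lia) _ Hred ltac:(lia)); lia.
Qed.
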